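(* Let $g,h\in\mathbb{F}[x]$ and let $\theta:A_h\to A_g$ be an $\mathbb{F}$-algebra isomorphism. Then $\theta(h)=\lambda g$ for some $\lambda\in\mathbb{F}^*$ (here $h\in\mathbb{F}[x]\subseteq A_h$ and $g\in\mathbb{F}[x]\subseteq A_g$).
   Context: $\mathbb{F}$ is an arbitrary field. For $h\in\mathbb{F}[x]$, $A_h$ is the unital associative $\mathbb{F}$-algebra generated by $x,\hat y$ with defining relation $\hat yx-x\hat y=h$; $\mathbb{F}[x]$ is naturally a subalgebra of $A_h$. *)

From HB Require Import structures.
From mathcomp Require Import all_boot all_order all_algebra.
Set Implicit Arguments. Unset Strict Implicit. Unset Printing Implicit Defensive.
Import Order.TTheory GRing.Theory Num.Theory.
Local Open Scope ring_scope.

Definition peval (F : fieldType) (A : algType F) (p : {poly F}) (a : A) : A :=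
  horner_alg a p.

(* (A, x, y) is a presentation of A_h = F<x, y> / (y x - x y - h(x)):
   the relation holds and (A, x, y) is universal (initial) among unital
   associative F-algebras with two elements satisfying the relation. *)
Definition is_Ah (F : fieldType) (h : {poly F}) (A : algType F) (x y : A) : Prop :=
  y * x - x * y = peval h x /\
  forall (C : algType F) (a b : C), b * a - a * b = peval h a ->
    exists f : {lrmorphism A -> C},
      [/\ f x = a, f y = b &
          forall f' : {lrmorphism A -> C}, f' x = a -> f' y = b -> f' =1 f].

(* Write G = g(x) in A_g.
   (1) Every commutator ab - ba of A_g lies in the right ideal G A_g: it holds
       for the generators (yx - xy = G), and G A_g is two-sided because x and y
       normalise G (yG = Gy + g'(x)G).
   (2) Since theta(h) = theta(y)theta(x) - theta(x)theta(y), we get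
       theta(h) = G c1, and symmetrically G = theta(h) theta(c2); hence
       G (1 - c1 theta(c2)) = 0.
   (3) A_g is a domain whose units are the nonzero scalars, so if G != 0 then
       c1 theta(c2) = 1 and c1 is a scalar.
   Facts (1) and (3) need a concrete handle on A_g, which is only given by its
   universal property.  We show that every element is a normal form
   sum_j p_j(x) y^j (left multiplication by x and y preserves the span of normal
   forms, so the universal property factors the left-regular representation
   through that span), and we build a faithful model of A_g acting on F[x][y]
   (x by multiplication, y by y + g d/dx) in which the y-degree is additive. *)

From HB Require Import structures.
From mathcomp Require Import all_boot all_order all_algebra.
From mathcomp Require Import boolp ring zify.
Set Implicit Arguments. Unset Strict Implicit. Unset Printing Implicit Defensive.
Import GRing.Theory.
Local Open Scope ring_scope.

(* A subspace of an F-vector space, given by a Prop-valued predicate: the spaces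
   considered here are infinite-dimensional and the span of normal forms is not
   a decidable set. *)
Record subspace (F : fieldType) (V : lmodType F) := Subspace {
  in_subspace :> V -> Prop;
  subspace0 : in_subspace 0;
  subspace_lin : forall (a : F) u v,
    in_subspace u -> in_subspace v -> in_subspace (a *: u + v) }.

Definition fullspace (F : fieldType) (V : lmodType F) : subspace V :=
  @Subspace _ _ (fun _ => True) I (fun _ _ _ _ _ => I).

Section SubspaceTheory.
Variables (F : fieldType) (V : lmodType F) (S : subspace V).

Lemma subspaceD u v : S u -> S v -> S (u + v).
Proof. by move=> Su Sv; have := subspace_lin 1 Su Sv; rewrite scale1r. Qed.

Lemma subspaceZ a u : S u -> S (a *: u).
Proof. by move=> Su; have := subspace_lin a Su (subspace0 S); rewrite addr0. Qed.

End SubspaceTheory.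

(* Linear endomorphisms of V stabilising S. *)
Record endo (F : fieldType) (V : lmodType F) (S : subspace V) (v0 : V)
    (v0_neq0 : v0 != 0) := Endo {
  endo_fun :> V -> V;
  endo_linear : linear endo_fun;
  endo_stable : forall v, S v -> S (endo_fun v) }.

Section EndoAlgebra.
Variables (F : fieldType) (V : lmodType F) (S : subspace V) (v0 : V).
Variable v0_neq0 : v0 != 0.
Local Notation E := (@endo F V S v0 v0_neq0).

HB.instance Definition _ (f : E) :=
  GRing.isLinear.Build F V V *:%R (endo_fun f) (endo_linear f).

Lemma endo_ext (f g : E) : f =1 g -> f = g.
Proof.
case: f g => f lf sf [g lg sg] /= /funext eq_fg; subst g.
by rewrite (Prop_irrelevance lf lg) (Prop_irrelevance sf sg).
Qed.

HB.instance Definition _ := gen_eqMixin E.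
HB.instance Definition _ := gen_choiceMixin E.

Program Definition endo_zero : E := @Endo _ _ S _ v0_neq0 (fun _ => 0) _ _.
Next Obligation. by move=> a u v; rewrite scaler0 addr0. Qed.
Next Obligation. exact: subspace0. Qed.

Program Definition endo_add (f g : E) : E :=
  @Endo _ _ S _ v0_neq0 (fun v => f v + g v) _ _.
Next Obligation. by move=> a u v; rewrite !linearP scalerDr addrACA. Qed.
Next Obligation. by apply: subspaceD; apply: endo_stable. Qed.

Program Definition endo_opp (f : E) : E :=
  @Endo _ _ S _ v0_neq0 (fun v => - f v) _ _.
Next Obligation. by move=> a u v; rewrite linearP opprD scalerN. Qed.
Next Obligation. by rewrite -scaleN1r; apply/subspaceZ/endo_stable. Qed.

Program Definition endo_one : E := @Endo _ _ S _ v0_neq0 id _ _.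
Next Obligation. by []. Qed.

Program Definition endo_mul (f g : E) : E :=
  @Endo _ _ S _ v0_neq0 (fun v => f (g v)) _ _.
Next Obligation. by move=> a u v; rewrite !linearP. Qed.
Next Obligation. by do 2 apply: endo_stable. Qed.

Program Definition endo_scale (c : F) (f : E) : E :=
  @Endo _ _ S _ v0_neq0 (fun v => c *: f v) _ _.
Next Obligation. by move=> a u v; rewrite linearP scalerDr !scalerA mulrC. Qed.
Next Obligation. by apply/subspaceZ/endo_stable. Qed.

Lemma endo_addA : associative endo_add.
Proof. by move=> f g h; apply: endo_ext => v /=; rewrite addrA. Qed.
Lemma endo_addC : commutative endo_add.
Proof. by move=> f g; apply: endo_ext => v /=; rewrite addrC. Qed.
Lemma endo_add0 : left_id endo_zero endo_add.
Proof. by move=> f; apply: endo_ext => v /=; rewrite add0r. Qed.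
Lemma endo_addN : left_inverse endo_zero endo_opp endo_add.
Proof. by move=> f; apply: endo_ext => v /=; rewrite addNr. Qed.
HB.instance Definition _ :=
  GRing.isZmodule.Build E endo_addA endo_addC endo_add0 endo_addN.

Lemma endo_mulA : associative endo_mul.
Proof. by move=> f g h; apply: endo_ext. Qed.
Lemma endo_mul1 : left_id endo_one endo_mul.
Proof. by move=> f; apply: endo_ext. Qed.
Lemma endo_mulr1 : right_id endo_one endo_mul.
Proof. by move=> f; apply: endo_ext. Qed.
Lemma endo_mulDl : left_distributive endo_mul endo_add.
Proof. by move=> f g h; apply: endo_ext. Qed.
Lemma endo_mulDr : right_distributive endo_mul endo_add.
Proof. by move=> f g h; apply: endo_ext => v /=; rewrite linearD. Qed.
Lemma endo_one_neq0 : endo_one != endo_zero.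
Proof.
apply/eqP => /(congr1 (fun f : E => endo_fun f v0)) /= /eqP.
by rewrite (negbTE v0_neq0).
Qed.
HB.instance Definition _ := GRing.Zmodule_isNzRing.Build E
  endo_mulA endo_mul1 endo_mulr1 endo_mulDl endo_mulDr endo_one_neq0.

Lemma endo_scaleA a b (f : E) :
  endo_scale a (endo_scale b f) = endo_scale (a * b) f.
Proof. by apply: endo_ext => v /=; rewrite scalerA. Qed.
Lemma endo_scale1 : left_id 1 endo_scale.
Proof. by move=> f; apply: endo_ext => v /=; rewrite scale1r. Qed.
Lemma endo_scaleDr : right_distributive endo_scale +%R.
Proof. by move=> a f g; apply: endo_ext => v /=; rewrite scalerDr. Qed.
Lemma endo_scaleDl (f : E) : {morph endo_scale^~ f : a b / a + b}.
Proof. by move=> a b; apply: endo_ext => v /=; rewrite scalerDl. Qed.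
HB.instance Definition _ := GRing.Zmodule_isLmodule.Build F E
  endo_scaleA endo_scale1 endo_scaleDr endo_scaleDl.

Lemma endo_scaleAl a (f g : E) : a *: (f * g) = (a *: f) * g.
Proof. by apply: endo_ext. Qed.
HB.instance Definition _ := GRing.Lmodule_isLalgebra.Build F E endo_scaleAl.
Lemma endo_scaleAr a (f g : E) : a *: (f * g) = f * (a *: g).
Proof. by apply: endo_ext => v /=; rewrite linearZ. Qed.
HB.instance Definition _ := GRing.Lalgebra_isAlgebra.Build F E endo_scaleAr.

Lemma endoDE (f g : E) v : (f + g) v = f v + g v. Proof. by []. Qed.
Lemma endoNE (f : E) v : (- f) v = - f v. Proof. by []. Qed.
Lemma endoME (f g : E) v : (f * g) v = f (g v). Proof. by []. Qed.
Lemma endoZE a (f : E) v : (a *: f) v = a *: f v. Proof. by []. Qed.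
Lemma endo1E v : (1 : E) v = v. Proof. by []. Qed.
Lemma endo0E v : (0 : E) v = 0. Proof. by []. Qed.
Lemma endo_sumE I (r : seq I) (P : pred I) (f : I -> E) v :
  (\sum_(i <- r | P i) f i) v = \sum_(i <- r | P i) f i v.
Proof. by elim/big_rec2: _ => [|i w e _ <-]. Qed.

End EndoAlgebra.

Section Peval.
Variables (F : fieldType) (A : algType F).
Implicit Types (p q : {poly F}) (a : A).

Lemma pevalD p q a : peval (p + q) a = peval p a + peval q a.
Proof. exact: rmorphD. Qed.
Lemma pevalM p q a : peval (p * q) a = peval p a * peval q a.
Proof. exact: rmorphM. Qed.
Lemma pevalC c a : peval c%:P a = c%:A.
Proof. exact: horner_algC. Qed.
Lemma pevalX a : peval 'X a = a.
Proof. exact: horner_algX. Qed.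
Lemma peval0 a : peval 0 a = 0.
Proof. exact: rmorph0. Qed.
Lemma peval1 a : peval 1 a = 1.
Proof. exact: rmorph1. Qed.
Lemma peval_comm p q a : peval p a * peval q a = peval q a * peval p a.
Proof. by rewrite -!pevalM mulrC. Qed.

End Peval.

Lemma peval_lrmorph (F : fieldType) (A B : algType F)
    (f : {lrmorphism A -> B}) p a :
  f (peval p a) = peval p (f a).
Proof.
elim/poly_ind: p => [|p c IHp]; first by rewrite !peval0 rmorph0.
rewrite !(pevalD, pevalM, pevalC, pevalX) rmorphD rmorphM -IHp.
by congr (_ + _); apply: rmorph_alg.
Qed.

(* The normal form sum_j f_j(x) y^j of f in F[x][y] (coefficient j of f is the
   polynomial in x multiplying y^j), evaluated in an arbitrary F-algebra. *)
Definition nf (F : fieldType) (A : algType F) (x y : A) (f : {poly {poly F}}) : A :=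
  \sum_(j < size f) peval f`_j x * y ^+ j.

Section NormalForm.
Variables (F : fieldType) (A : algType F) (x y : A).
Local Notation nf := (nf x y).
Implicit Types (f : {poly {poly F}}) (p : {poly F}).

Lemma nf_widen f m : (size f <= m)%N -> nf f = \sum_(j < m) peval f`_j x * y ^+ j.
Proof.
move=> le_f_m; rewrite /nf -(subnKC le_f_m) big_split_ord /=.
rewrite [X in _ = _ + X]big1 ?addr0 // => j _.
by rewrite nth_default ?leq_addr // peval0 mul0r.
Qed.

Lemma nf0 : nf 0 = 0.
Proof. by rewrite /nf size_poly0 big_ord0. Qed.

Lemma nf1 : nf 1 = 1.
Proof. by rewrite /nf size_poly1 big_ord1 coefC /= peval1 mul1r expr0. Qed.

Lemma nfC p : nf p%:P = peval p x.
Proof.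
by rewrite (@nf_widen _ 1) ?size_polyC_leq1 // big_ord1 coefC /= expr0 mulr1.
Qed.

(* nf is F-linear (scalars of F act on F[x][y] through double constants). *)
Lemma nf_lin (a : F) f1 f2 : nf (a%:P *: f1 + f2) = a *: nf f1 + nf f2.
Proof.
set m := maxn (size f1) (size f2).
have le_f1 : (size f1 <= m)%N by rewrite leq_maxl.
have le_f2 : (size f2 <= m)%N by rewrite leq_maxr.
have le_f : (size (a%:P *: f1 + f2)%R <= m)%N.
  apply: (leq_trans (size_polyD _ _)); rewrite geq_max le_f2 andbT.
  exact: leq_trans (size_scale_leq _ _) le_f1.
rewrite (nf_widen le_f1) (nf_widen le_f2) (nf_widen le_f) scaler_sumr -big_split.
apply: eq_bigr => j _.
by rewrite coefD coefZ pevalD pevalM pevalC mulrDl mulr_algl scalerAl.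
Qed.

Lemma nf_mulx f : x * nf f = nf (('X : {poly F})%:P * f).
Proof.
have le_f : (size (('X : {poly F})%:P * f)%R <= size f)%N.
  apply: (leq_trans (size_polyMleq _ _)).
  by rewrite -subn1 leq_subLR leq_add2r size_polyC_leq1.
rewrite (nf_widen le_f) /nf mulr_sumr; apply: eq_bigr => j _.
by rewrite coefCM pevalM pevalX mulrA.
Qed.

Lemma nf_closure (P : A -> Prop) :
  P 1 -> P x -> P y -> (forall a b, P a -> P b -> P (a + b)) ->
  (forall (c : F) a, P a -> P (c *: a)) -> (forall a b, P a -> P b -> P (a * b)) ->
  forall f, P (nf f).
Proof.
move=> P1 Px Py PD PZ PM.
have P0 : P 0 by rewrite -(scale0r 1); apply: PZ.
have Ppeval p : P (peval p x).
  elim/poly_ind: p => [|p c IHp]; first by rewrite peval0.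
  by rewrite pevalD pevalM pevalX pevalC; apply: PD; [apply: PM | apply: PZ].
have Pyn n : P (y ^+ n) by elim: n => [|n IHn]; rewrite ?expr0 // exprS; apply: PM.
by move=> f; apply: big_ind => // j _; apply: PM.
Qed.

End NormalForm.

Section Relation.
Variables (F : fieldType) (g : {poly F}) (A : algType F) (x y : A).
Hypothesis rel : y * x - x * y = peval g x.
Local Notation G := (peval g x).

Lemma mul_y_peval p : y * peval p x = peval p x * y + peval (p^`() * g) x.
Proof.
have yx : y * x = x * y + G by rewrite -rel addrC subrK.
have Gx : G * x = x * G by have := peval_comm g 'X x; rewrite pevalX.
elim/poly_ind: p => [|p c IHp].
  by rewrite deriv0 mul0r !peval0 mulr0 mul0r addr0.
rewrite derivMXaddC !(pevalD, pevalM, pevalX, pevalC).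
rewrite mulrDr mulrA IHp mulrDl -mulrA yx.
rewrite pevalM -(mulrA _ G x) Gx mulr_algr !mulrDl mulr_algl !mulrDr !mulrA.
by rewrite -!addrA; congr (_ + _); rewrite [RHS]addrC -addrA.
Qed.

Lemma nf_muly f :
  y * nf x y f = nf x y ('X * f + map_poly (fun p => p^`() * g) f).
Proof.
set f' := map_poly _ f.
have le_f' : (size f' <= size f)%N.
  by rewrite /f' map_polyE (leq_trans (size_Poly _)) // size_map.
have le_Xf : (size ('X * f)%R <= (size f).+1)%N.
  rewrite mulrC; have [->|f_neq0] := eqVneq f 0; first by rewrite mul0r size_poly0.
  by rewrite size_mulX.
have le_sum : (size ('X * f + f')%R <= (size f).+1)%N.
  apply: (leq_trans (size_polyD _ _)); rewrite geq_max le_Xf /=.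
  exact: leq_trans le_f' _.
rewrite (nf_widen _ _ le_sum).
under eq_bigr => j _ do rewrite coefD pevalD mulrDl.
rewrite big_split /= -(nf_widen _ _ (leq_trans le_f' (leqnSn _))) (nf_widen _ _ le_f').
rewrite big_ord_recl coefXM eqxx peval0 mul0r add0r.
rewrite /nf mulr_sumr -big_split /=; apply: eq_bigr => j _.
rewrite coefXM /= /bump /= add1n /f' coef_map_id0; last by rewrite deriv0 mul0r.
by rewrite mulrA mul_y_peval mulrDl exprS mulrA.
Qed.

End Relation.

(* Left
   multiplications by x and y stabilise the span N of normal forms, so by the
   universal property there is a morphism Phi : A_g -> End(N) with Phi x = L_x,
   Phi y = L_y; by uniqueness it agrees with the left-regular representation,
   whence a = Phi(a)(1) lies in N. *)
Section Spanning.
Variables (F : fieldType) (g : {poly F}) (D : algType F) (x y : D).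
Hypothesis HD : is_Ah g x y.

Definition nf_span : subspace D.
Proof.
exists (fun a => exists f, a = nf x y f); first by exists 0; rewrite nf0.
by move=> c _ _ [f1 ->] [f2 ->]; exists (c%:P *: f1 + f2); rewrite nf_lin.
Defined.

Local Notation EN := (@endo F D nf_span 1 (oner_neq0 D)).
Local Notation ET := (@endo F D (fullspace D) 1 (oner_neq0 D)).

Lemma mul_linear (a : D) : linear (fun v : D => a * v).
Proof. by move=> c u v; rewrite mulrDr scalerAr. Qed.

Lemma nf_span_mulx v : nf_span v -> nf_span (x * v).
Proof. by case=> f ->; exists (('X : {poly F})%:P * f); rewrite nf_mulx. Qed.

Lemma nf_span_muly v : nf_span v -> nf_span (y * v).
Proof.
case=> f ->; exists ('X * f + map_poly (fun p => p^`() * g) f).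
by rewrite (nf_muly HD.1).
Qed.

Definition lmul (a : D) : ET :=
  @Endo _ _ (fullspace D) _ (oner_neq0 D) _ (mul_linear a) (fun _ _ => I).

Lemma lmul_linear : linear lmul.
Proof. by move=> c u v; apply: endo_ext => w /=; rewrite mulrDl scalerAl. Qed.
Lemma lmul_monoid : monoid_morphism lmul.
Proof. by split=> [|a b]; apply: endo_ext => w /=; rewrite ?mul1r ?mulrA. Qed.
HB.instance Definition _ := GRing.isLinear.Build F D ET *:%R lmul lmul_linear.
HB.instance Definition _ := GRing.isMonoidMorphism.Build D ET lmul lmul_monoid.

Definition forget (e : EN) : ET :=
  @Endo _ _ (fullspace D) _ (oner_neq0 D) _ (endo_linear e) (fun _ _ => I).

Lemma forget_linear : linear forget.
Proof. by move=> c u v; apply: endo_ext. Qed.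
Lemma forget_monoid : monoid_morphism forget.
Proof. by split=> [|a b]; apply: endo_ext. Qed.
HB.instance Definition _ := GRing.isLinear.Build F EN ET *:%R forget forget_linear.
HB.instance Definition _ := GRing.isMonoidMorphism.Build EN ET forget forget_monoid.

Definition lmul_x : EN :=
  @Endo _ _ nf_span _ (oner_neq0 D) _ (mul_linear x) nf_span_mulx.
Definition lmul_y : EN :=
  @Endo _ _ nf_span _ (oner_neq0 D) _ (mul_linear y) nf_span_muly.

Lemma peval_lmul_x p v : peval p lmul_x v = peval p x * v.
Proof.
have forget_x : forget lmul_x = lmul x by apply: endo_ext.
have /= := congr1 (fun e : ET => e v) (peval_lrmorph forget p lmul_x).
by rewrite forget_x -(peval_lrmorph lmul) => ->.
Qed.

Lemma lmul_rel : lmul_y * lmul_x - lmul_x * lmul_y = peval g lmul_x.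
Proof.
apply: endo_ext => v; rewrite endoDE endoNE !endoME peval_lmul_x /=.
by rewrite !mulrA -mulrBl HD.1.
Qed.

Lemma nf_surjective a : exists f, a = nf x y f.
Proof.
have [Phi [Phi_x Phi_y _]] := HD.2 _ _ _ lmul_rel.
have lmul_rel' : lmul y * lmul x - lmul x * lmul y = peval g (lmul x).
  by rewrite -!rmorphM -rmorphB HD.1; apply: peval_lrmorph.
have [lrep [_ _ unique]] := HD.2 _ _ _ lmul_rel'.
have Phi_lrep : (forget \o Phi) =1 lrep.
  by apply: unique; rewrite /= ?Phi_x ?Phi_y; apply: endo_ext.
have lmul_lrep : lmul =1 lrep := unique lmul erefl erefl.
have <- : Phi a 1 = a.
  have /(congr1 (fun e : ET => e 1)) := etrans (Phi_lrep a) (esym (lmul_lrep a)).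
  by rewrite /= mulr1.
by apply: (endo_stable (Phi a)); exists 1; rewrite nf1.
Qed.

Lemma Ah_ind (P : D -> Prop) :
  P 1 -> P x -> P y -> (forall a b, P a -> P b -> P (a + b)) ->
  (forall (c : F) a, P a -> P (c *: a)) -> (forall a b, P a -> P b -> P (a * b)) ->
  forall a, P a.
Proof.
move=> P1 Px Py PD PZ PM a; have [f ->] := nf_surjective a.
exact: nf_closure.
Qed.

End Spanning.

Section Commutators.
Variables (F : fieldType) (g : {poly F}) (D : algType F) (x y : D).
Hypothesis HD : is_Ah g x y.
Local Notation G := (peval g x).

(* A_g G is contained in G A_g (x commutes with G, and yG = G(y + g'(x))). *)
Lemma mul_G_right d : exists c, d * G = G * c.
Proof.
apply: (Ah_ind HD (P := fun d => exists c, d * G = G * c)) => {d}.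
- by exists 1; rewrite mul1r mulr1.
- by exists x; have := peval_comm g 'X x; rewrite pevalX.
- exists (y + peval g^`() x); rewrite (mul_y_peval HD.1) pevalM mulrDr.
  by rewrite [peval g^`() x * _]peval_comm.
- by move=> a b [c1 e1] [c2 e2]; exists (c1 + c2); rewrite mulrDl e1 e2 mulrDr.
- by move=> c a [c1 e1]; exists (c *: c1); rewrite -scalerAl e1 scalerAr.
- by move=> a b [c1 e1] [c2 e2]; exists (c1 * c2); rewrite -mulrA e2 mulrA e1 mulrA.
Qed.

(* If a commutes with x and y modulo G A_g, it commutes with everything modulo
   G A_g, by the Leibniz rule [a, b1 b2] = [a, b1] b2 + b1 [a, b2]. *)
Lemma commutator_from_generators a :
  (exists c, a * x - x * a = G * c) -> (exists c, a * y - y * a = G * c) ->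
  forall b, exists c, a * b - b * a = G * c.
Proof.
move=> Cx Cy.
apply: (Ah_ind HD (P := fun b => exists c, a * b - b * a = G * c)) => //.
- by exists 0; rewrite mulr1 mul1r subrr mulr0.
- move=> b1 b2 [c1 e1] [c2 e2]; exists (c1 + c2).
  by rewrite mulrDr mulrDl opprD addrACA e1 e2 mulrDr.
- move=> c b [c1 e1]; exists (c *: c1).
  by rewrite -scalerAr -scalerAl -scalerBr e1 scalerAr.
- move=> b1 b2 [c1 e1] [c2 e2].
  have [c' e'] := mul_G_right b1.
  exists (c1 * b2 + c' * c2).
  have -> : a * (b1 * b2) - b1 * b2 * a =
            (a * b1 - b1 * a) * b2 + b1 * (a * b2 - b2 * a).
    by rewrite mulrBl mulrBr !mulrA addrA subrK.
  by rewrite e1 e2 mulrA e' mulrDr !mulrA.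
Qed.

Lemma commutator_in_ideal a b : exists c, a * b - b * a = G * c.
Proof.
have Cx b' : exists c, x * b' - b' * x = G * c.
  apply: commutator_from_generators; first by exists 0; rewrite subrr mulr0.
  by exists (-1); rewrite mulrN1 -HD.1 opprB.
have Cy b' : exists c, y * b' - b' * y = G * c.
  apply: commutator_from_generators; last by exists 0; rewrite subrr mulr0.
  by exists 1; rewrite mulr1 HD.1.
apply: commutator_from_generators.
- by have [c e] := Cx a; exists (- c); rewrite mulrN -e opprB.
- by have [c e] := Cy a; exists (- c); rewrite mulrN -e opprB.
Qed.

End Commutators.

(* F[x][y] (coefficients in F[x], outer variable y) as an F-vector space, F
   acting through double constants; it carries the faithful model of A_g. *)
Definition bipoly (F : fieldType) : Type := {poly {poly F}}.
HB.instance Definition _ (F : fieldType) := GRing.Zmodule.on (bipoly F).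

Section BipolyLmodule.
Variable F : fieldType.

Definition bipoly_scale (c : F) (v : bipoly F) : bipoly F :=
  (c%:P)%:P * (v : {poly {poly F}}).

Lemma bipoly_scaleA a b v :
  bipoly_scale a (bipoly_scale b v) = bipoly_scale (a * b) v.
Proof. by rewrite /bipoly_scale mulrA -!polyCM. Qed.
Lemma bipoly_scale1 : left_id 1 bipoly_scale.
Proof. by move=> v; rewrite /bipoly_scale mul1r. Qed.
Lemma bipoly_scaleDr : right_distributive bipoly_scale +%R.
Proof. by move=> a u v; rewrite /bipoly_scale mulrDr. Qed.
Lemma bipoly_scaleDl v : {morph bipoly_scale^~ v : a b / a + b}.
Proof. by move=> a b; rewrite /bipoly_scale !polyCD mulrDl. Qed.
HB.instance Definition _ := GRing.Zmodule_isLmodule.Build F (bipoly F)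
  bipoly_scaleA bipoly_scale1 bipoly_scaleDr bipoly_scaleDl.

Lemma bipoly_scaleE (c : F) (v : bipoly F) :
  c *: v = ((c%:P)%:P * (v : {poly {poly F}}) : bipoly F).
Proof. by []. Qed.

Lemma bipoly_linear (f : {poly {poly F}} -> {poly {poly F}}) :
  (forall c u v, f ((c%:P)%:P * u + v) = (c%:P)%:P * f u + f v) ->
  linear (f : bipoly F -> bipoly F).
Proof. by move=> f_lin c u v; apply: f_lin. Qed.

Definition bipoly1 : bipoly F := (1 : {poly {poly F}}).
Lemma bipoly1_neq0 : bipoly1 != 0. Proof. exact: oner_neq0. Qed.

End BipolyLmodule.

Definition dx (F : fieldType) (v : {poly {poly F}}) : {poly {poly F}} :=
  map_poly (fun p => p^`()) v.

Section PartialDerivative.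
Variable F : fieldType.
Implicit Types (u v : {poly {poly F}}) (q : {poly F}).

Lemma dxD u v : dx (u + v) = dx u + dx v.
Proof. by apply/polyP => i; rewrite coefD !coef_map_id0 ?deriv0 // coefD derivD. Qed.

Lemma dxM q v : dx (q%:P * v) = q^`()%:P * v + q%:P * dx v.
Proof.
apply/polyP => i; rewrite coefD !coefCM !coef_map_id0 ?deriv0 //.
by rewrite coefCM derivM.
Qed.

Lemma size_dx v : (size (dx v) <= size v)%N.
Proof. by rewrite /dx map_polyE (leq_trans (size_Poly _)) // size_map. Qed.

End PartialDerivative.

(* This is the left-regular action of A_g on normal forms; in it, the action of
   a nonzero normal form raises the y-degree exactly by its own y-degree. *)
Section Model.
Variables (F : fieldType) (g : {poly F}).
Local Notation E := (@endo F (bipoly F) (fullspace _) _ (bipoly1_neq0 F)).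
Local Notation xP := (('X : {poly F})%:P : {poly {poly F}}).

Lemma mulx_linear : linear (fun v : bipoly F => (xP * v : bipoly F)).
Proof. by apply: bipoly_linear => c u v; rewrite mulrDr mulrCA. Qed.

Lemma ymap_linear :
  linear (fun v : bipoly F => (g%:P * dx v + 'X * (v : {poly {poly F}}) : bipoly F)).
Proof.
apply: bipoly_linear => c u v.
by rewrite dxD dxM derivC polyC0 mul0r add0r; ring.
Qed.

Definition mulx : E :=
  @Endo _ _ (fullspace _) _ (bipoly1_neq0 F) _ mulx_linear (fun _ _ => I).
Definition ymap : E :=
  @Endo _ _ (fullspace _) _ (bipoly1_neq0 F) _ ymap_linear (fun _ _ => I).

Lemma peval_mulx p (v : bipoly F) :
  peval p mulx v = (p%:P * (v : {poly {poly F}}) : bipoly F).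
Proof.
elim/poly_ind: p v => [|p c IHp] v; first by rewrite !peval0 endo0E mul0r.
rewrite !(pevalD, pevalM, pevalX, pevalC) endoDE endoME IHp endoZE endo1E.
by rewrite bipoly_scaleE /= polyCD polyCM; ring.
Qed.

Lemma model_rel : ymap * mulx - mulx * ymap = peval g mulx.
Proof.
apply: endo_ext => v; rewrite endoDE endoNE !endoME peval_mulx /= dxM derivX.
ring.
Qed.

Definition act (e : E) (v : {poly {poly F}}) : {poly {poly F}} := e v.

Lemma act_mul (e1 e2 : E) v : act (e1 * e2) v = act e1 (act e2 v).
Proof. by []. Qed.

Lemma ymap_lead v : v != 0 ->
  size (act ymap v) = (size v).+1 /\ lead_coef (act ymap v) = lead_coef v.
Proof.
move=> v_neq0.
have size_Xv : size ('X * v)%R = (size v).+1 by rewrite mulrC size_mulX.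
have size_dv : (size (g%:P * dx v)%R <= size v)%N.
  apply: (leq_trans (size_polyMleq _ _)).
  by rewrite -subn1 leq_subLR (leq_add (size_polyC_leq1 _) (size_dx v)).
rewrite /act /= addrC size_polyDl size_Xv ?ltnS //; split => //.
by rewrite lead_coefDl ?size_Xv ?ltnS // mulrC lead_coefMX.
Qed.

Lemma ymapn_lead n v : v != 0 ->
  size (act (ymap ^+ n) v) = (size v + n)%N /\
  lead_coef (act (ymap ^+ n) v) = lead_coef v.
Proof.
move=> v_neq0; elim: n => [|n [IHsize IHlead]]; first by rewrite expr0 addn0.
have yn_neq0 : act (ymap ^+ n) v != 0.
  by rewrite -size_poly_gt0 IHsize addn_gt0 size_poly_gt0 v_neq0.
have [size_y lead_y] := ymap_lead yn_neq0.
by rewrite exprS act_mul size_y lead_y IHsize IHlead addnS.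
Qed.

Lemma act_nf f v : act (nf mulx ymap f) v = \sum_(j < size f) (f`_j)%:P * act (ymap ^+ j) v.
Proof.
rewrite /nf /act endo_sumE; apply: eq_bigr => j _.
by rewrite endoME peval_mulx.
Qed.

(* The normal form f acts on v != 0 with y-degree and leading coefficient
   given by those of f: only the top term f_n(x) y^n contributes to them. *)
Lemma nf_act_lead f v : f != 0 -> v != 0 ->
  size (act (nf mulx ymap f) v) = (size v + (size f).-1)%N /\
  lead_coef (act (nf mulx ymap f) v) = lead_coef f * lead_coef v.
Proof.
move=> f_neq0 v_neq0.
pose T j := (f`_j)%:P * act (ymap ^+ j) v.
have size_T j : (size (T j) <= size v + j)%N.
  apply: (leq_trans (size_polyMleq _ _)).
  rewrite (ymapn_lead j v_neq0).1 -subn1 leq_subLR.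
  by rewrite (leq_add (size_polyC_leq1 _) (leqnn _)).
have size_low k : (size (\sum_(j < k) T j)%R <= (size v + k).-1)%N.
  elim: k => [|k IHk]; first by rewrite big_ord0 size_poly0.
  rewrite big_ord_recr /=; apply: (leq_trans (size_polyD _ _)).
  by rewrite geq_max addnS /= (leq_trans IHk) ?leq_pred ?size_T.
have [n size_f] : exists n, size f = n.+1.
  by exists (size f).-1; rewrite prednK // size_poly_gt0.
have lead_f : f`_n = lead_coef f by rewrite lead_coefE size_f.
have fn_neq0 : f`_n != 0 by rewrite lead_f lead_coef_eq0.
have size_Tn : size (T n) = (size v + n)%N.
  by rewrite size_Cmul // (ymapn_lead n v_neq0).1.
have lead_Tn : lead_coef (T n) = lead_coef f * lead_coef v.
  by rewrite lead_coefM lead_coefC lead_f (ymapn_lead n v_neq0).2.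
have low_lt_Tn : (size (\sum_(j < n) T j)%R < size (T n))%N.
  by rewrite size_Tn (leq_ltn_trans (size_low n)) // ltn_predL addn_gt0 size_poly_gt0 v_neq0.
rewrite act_nf size_f big_ord_recr /= -/(T n).
rewrite (eq_bigr (fun j : 'I_n => T j)) //= in low_lt_Tn *.
by rewrite addrC size_polyDl ?lead_coefDl // size_Tn.
Qed.

Lemma nf_act_neq0 f v : f != 0 -> v != 0 -> act (nf mulx ymap f) v != 0.
Proof.
move=> f_neq0 v_neq0; rewrite -size_poly_gt0 (nf_act_lead f_neq0 v_neq0).1.
by rewrite addn_gt0 size_poly_gt0 v_neq0.
Qed.

End Model.

(* A_g acts faithfully on F[x][y]; by the degree count of nf_act_lead it is a
   domain whose units are the nonzero scalars. *)
Section Faithful.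
Variables (F : fieldType) (g : {poly F}) (D : algType F) (x y : D).
Hypothesis HD : is_Ah g x y.
Local Notation E := (@endo F (bipoly F) (fullspace _) _ (bipoly1_neq0 F)).
Local Notation act := (@act F).
Local Notation mx := (mulx F).
Local Notation my := (ymap g).

Lemma model_exists : exists rho : {lrmorphism D -> E}, rho x = mx /\ rho y = my.
Proof. by have [rho [rho_x rho_y _]] := HD.2 _ _ _ (model_rel g); exists rho. Qed.

Lemma model_nf (rho : {lrmorphism D -> E}) : rho x = mx -> rho y = my ->
  forall f, rho (nf x y f) = nf mx my f.
Proof.
move=> rho_x rho_y f; rewrite /nf rmorph_sum; apply: eq_bigr => j _.
rewrite rmorphM rmorphXn -rho_x -rho_y; congr (_ * _); exact: peval_lrmorph.
Qed.

Lemma nf_neq0 f : f != 0 -> nf x y f != 0.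
Proof.
move=> f_neq0; have [rho [rho_x rho_y]] := model_exists.
apply: contra_neq (nf_act_neq0 g f_neq0 (bipoly1_neq0 F)) => nf_f0.
by rewrite -(model_nf rho_x rho_y) nf_f0 rmorph0.
Qed.

Lemma nf_nonzero a : a != 0 -> exists2 f, f != 0 & a = nf x y f.
Proof.
move=> a_neq0; have [f a_nf] := nf_surjective HD a; exists f => //.
by apply: contraNneq a_neq0 => f0; rewrite a_nf f0 nf0.
Qed.

Lemma Ah_mulf_neq0 (a b : D) : a != 0 -> b != 0 -> a * b != 0.
Proof.
move=> /nf_nonzero [fa fa_neq0 ->] /nf_nonzero [fb fb_neq0 ->].
have [rho [rho_x rho_y]] := model_exists.
have := nf_act_neq0 g fa_neq0 (nf_act_neq0 g fb_neq0 (bipoly1_neq0 F)).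
apply: contra_neq => ab0.
by rewrite -act_mul -!(model_nf rho_x rho_y) -rmorphM ab0 rmorph0.
Qed.

Lemma Ah_mulfI (a b c : D) : a != 0 -> a * b = a * c -> b = c.
Proof.
move=> a_neq0 ab_ac; apply/eqP; rewrite -subr_eq0; apply/negPn/negP => bc_neq0.
by have := Ah_mulf_neq0 a_neq0 bc_neq0; rewrite mulrBr ab_ac subrr eqxx.
Qed.

Lemma Ah_unit_scalar (c d : D) : c * d = 1 -> exists2 lam : F, lam != 0 & c = lam%:A.
Proof.
move=> cd1.
have c_neq0 : c != 0 by apply: contra_eq_neq cd1 => ->; rewrite mul0r eq_sym oner_neq0.
have d_neq0 : d != 0 by apply: contra_eq_neq cd1 => ->; rewrite mulr0 eq_sym oner_neq0.
have [fc fc_neq0 c_nf] := nf_nonzero c_neq0.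
have [fd fd_neq0 d_nf] := nf_nonzero d_neq0.
have [rho [rho_x rho_y]] := model_exists.
have act1 : act (nf mx my fc) (act (nf mx my fd) (bipoly1 F)) = bipoly1 F.
  by rewrite -act_mul -!(model_nf rho_x rho_y) -rmorphM -c_nf -d_nf cd1 rmorph1.
have w_neq0 := nf_act_neq0 g fd_neq0 (bipoly1_neq0 F).
have [size_c lead_c] := nf_act_lead g fc_neq0 w_neq0.
have [size_d lead_d] := nf_act_lead g fd_neq0 (bipoly1_neq0 F).
rewrite act1 size_d /bipoly1 size_poly1 in size_c.
rewrite act1 lead_d /bipoly1 lead_coef1 mulr1 in lead_c.
have size_fc : size fc = 1%N by have := size_poly_gt0 fc; rewrite fc_neq0; lia.
have : lead_coef fc \is a GRing.unit by apply/unitrPr; exists (lead_coef fd).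
rewrite poly_unitE => /andP [/eqP size_lead unit_lead].
have fc_const : fc = (lead_coef fc)%:P.
  by rewrite lead_coefE size_fc; apply: size1_polyC; rewrite size_fc.
have lead_const : lead_coef fc = ((lead_coef fc)`_0)%:P.
  by apply: size1_polyC; rewrite size_lead.
exists (lead_coef fc)`_0; first by rewrite -unitfE.
by rewrite c_nf {1}fc_const nfC {1}lead_const pevalC.
Qed.

End Faithful.

Theorem lemma8p1 (F : fieldType) (g h : {poly F})
  (Ah : algType F) (xh yh : Ah) (Ag : algType F) (xg yg : Ag)
  (HAh : is_Ah h xh yh) (HAg : is_Ah g xg yg)
  (theta : {lrmorphism Ah -> Ag}) (Htheta : bijective theta) :
  exists lambda : F, lambda != 0 /\ theta (peval h xh) = lambda *: peval g xg.
Proof.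
set H := peval h xh; set G := peval g xg.
have theta_comm a b : theta (a * b - b * a) = theta a * theta b - theta b * theta a.
  by rewrite rmorphB !rmorphM.
(* theta(H) = [theta yh, theta xh] lies in G A_g. *)
have [c1 thetaH] : exists c1, theta H = G * c1.
  by rewrite /H -HAh.1 theta_comm; apply: (commutator_in_ideal HAg).
(* G = [yg, xg] is the image of a commutator of A_h, so lies in theta(H) A_g. *)
have [c2 G_eq] : exists c2, G = theta H * theta c2.
  case: Htheta => phi _ phiK.
  have [c2 e] := commutator_in_ideal HAh (phi yg) (phi xg).
  exists c2; have := congr1 theta e.
  by rewrite theta_comm !phiK HAg.1 rmorphM.
have [g0 | g_neq0] := eqVneq g 0.
  by exists 1; rewrite oner_neq0 thetaH /G g0 peval0 mul0r scaler0.
have G_neq0 : G != 0 by rewrite /G -(nfC xg yg) (nf_neq0 HAg) // polyC_eq0.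
have c1_inv : c1 * theta c2 = 1.
  by apply: (Ah_mulfI HAg G_neq0); rewrite mulr1 mulrA -thetaH -G_eq.
have [lam lam_neq0 c1E] := Ah_unit_scalar HAg c1_inv.
by exists lam; rewrite lam_neq0 thetaH c1E mulr_algr.
Qed.
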